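(* Let $f:\mathbb{R}^n\to\mathbb{R}$ be a continuous convex function, $X_0\in\mathbb{R}^n$ and $R>0$, and let $B(X_0,R)$ be the open ball centered at $X_0$ of radius $R$. Suppose there exists $\underline{d}>0$ such that for all $X\in B(X_0,R)$ and all $d_X\in\partial f(X)$ one has $\|d_X\|\ge \underline{d}$. Then there exist $X\in B(X_0,R)$ and $d_X\in\partial f(X)$ such that $$X-X_0=-\frac{R}{2}\cdot\frac{d_X}{\|d_X\|}.$$
   Context: $\partial f(X)$ denotes the subdifferential (set of subgradients) of the convex function $f$ at $X$. *)

From HB Require Import structures.
From mathcomp Require Import all_boot all_order all_algebra.
From mathcomp Require Import all_classical all_reals all_analysis.
Set Implicit Arguments. Unset Strict Implicit. Unset Printing Implicit Defensive.
Import Order.TTheory GRing.Theory Num.Theory.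
Import numFieldTopology.Exports.
Local Open Scope ring_scope.

Definition dotv (R : realType) (n : nat) (u v : 'rV[R]_n) : R :=
  \sum_(i < n) u ord0 i * v ord0 i.

Definition enorm (R : realType) (n : nat) (u : 'rV[R]_n) : R :=
  Num.sqrt (dotv u u).

Definition in_open_ball (R : realType) (n : nat) (X0 : 'rV[R]_n) (r : R)
  (X : 'rV[R]_n) : Prop := enorm (X - X0) < r.

Definition convex_fun (R : realType) (n : nat) (f : 'rV[R]_n -> R) : Prop :=
  forall (x y : 'rV[R]_n) (t : R), 0 <= t -> t <= 1 ->
    f (t *: x + (1 - t) *: y) <= t * f x + (1 - t) * f y.

Definition subgradient (R : realType) (n : nat) (f : 'rV[R]_n -> R)
  (X d : 'rV[R]_n) : Prop :=
  forall Y : 'rV[R]_n, f X + dotv d (Y - X) <= f Y.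

(* For t > 0 let P t minimise t f + |. - X0|^2 / 2 over the closed ball of
   radius r around X0.  Whenever P t lies in the open ball, (X0 - P t) / t is
   a subgradient of f at P t, of norm |P t - X0| / t.  Strong convexity of the
   objective makes t |-> |P t - X0|^2 continuous; it tends to 0 with t, and at
   t = (r/2) / dl it is at least (r/2)^2, for otherwise the subgradient at P t
   would have norm below dl.  The intermediate value theorem yields t with
   |P t - X0| = r/2, and X = P t, d = (X0 - X) / t are as required. *)

From HB Require Import structures.
From mathcomp Require Import all_boot all_order all_algebra.
From mathcomp Require Import all_classical all_reals all_analysis.
From mathcomp Require Import ring lra.
Import Order.TTheory GRing.Theory Num.Theory.
Import numFieldTopology.Exports.
Set Implicit Arguments.
Unset Strict Implicit.
Unset Printing Implicit Defensive.
Local Open Scope ring_scope.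

Section RealFacts.
Variable R : realFieldType.
Implicit Types a b m x y : R.

Lemma ler_of_small_slack a b m :
  (forall s, 0 < s -> s <= 1 -> a <= b + s * m) -> a <= b.
Proof.
move=> h; apply/ler_addgt0Pr => e e0.
have m1 : 0 < `|m| + 1 by rewrite ltr_wpDl.
set s := Num.min 1 (e / (`|m| + 1)).
have s0 : 0 < s by rewrite lt_min ltr01 divr_gt0.
have se : s * `|m| + s <= e.
  by rewrite -[s in _ + s]mulr1 -mulrDr -ler_pdivlMr // ge_min lexx orbT.
have sm : s * m <= s * `|m| by apply: ler_wpM2l; [exact: ltW | exact: ler_norm].
have s1 : s <= 1 by rewrite ge_min lexx.
by apply: le_trans (h s s0 s1) _; lra.
Qed.

Lemma dist_maxr_le x y a : `|Num.max x a - Num.max y a| <= `|x - y|.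
Proof.
have h1 := ler_norm (x - y); have := ler_norm (y - x); rewrite distrC => h2.
by rewrite !maxEle ler_norml; case: (leP x a); case: (leP y a) => *;
  apply/andP; split; lra.
Qed.
End RealFacts.

Section Euclidean.
Variables (R : realType) (n : nat).
Implicit Types (u v X Y Z : 'rV[R]_n) (a s : R).

Definition sqdist X Y := dotv (X - Y) (X - Y).

Lemma dotvZl a u v : dotv (a *: u) v = a * dotv u v.
Proof.
by rewrite /dotv mulr_sumr; apply: eq_bigr => i _; rewrite mxE mulrA.
Qed.

Lemma dotvZr a u v : dotv u (a *: v) = a * dotv u v.
Proof.
by rewrite /dotv mulr_sumr; apply: eq_bigr => i _; rewrite mxE mulrCA.
Qed.

Lemma sqr_coord_le_dotv u i : u ord0 i ^+ 2 <= dotv u u.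
Proof.
rewrite /dotv (bigD1 i) //= -expr2 lerDl.
by apply: sumr_ge0 => j _; rewrite -expr2 sqr_ge0.
Qed.

Lemma sqdist_ge0 X Y : 0 <= sqdist X Y.
Proof. by apply: sumr_ge0 => i _; rewrite -expr2 sqr_ge0. Qed.

Lemma sqdistxx X : sqdist X X = 0.
Proof. by rewrite /sqdist subrr /dotv big1 // => i _; rewrite mxE mul0r. Qed.

Lemma sqdistC X Y : sqdist X Y = sqdist Y X.
Proof. by rewrite /sqdist /dotv; apply: eq_bigr => i _; rewrite !mxE; ring. Qed.

Lemma enormB X Y : enorm (X - Y) = Num.sqrt (sqdist X Y).
Proof. by []. Qed.

Lemma enormZ a u : enorm (a *: u) = `|a| * enorm u.
Proof.
by rewrite /enorm dotvZl dotvZr mulrA -expr2 sqrtrM ?sqr_ge0 // sqrtr_sqr.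
Qed.

Lemma normr_le_enorm u : `|u| <= enorm u.
Proof.
rewrite [leLHS]/Num.norm /= mx_normrE.
apply: bigmax_le => [|[i j] _ /=]; first exact: sqrtr_ge0.
by rewrite (ord1 i) -sqrtr_sqr ler_wsqrtr // sqr_coord_le_dotv.
Qed.

Lemma sqdist_convex_comb X Y Z s :
  sqdist (s *: Y + (1 - s) *: Z) X =
  s * sqdist Y X + (1 - s) * sqdist Z X - s * (1 - s) * sqdist Y Z.
Proof.
rewrite /sqdist /dotv !mulr_sumr -!big_split -sumrN -big_split /=.
by apply: eq_bigr => i _; rewrite !mxE; ring.
Qed.

Lemma dotv_sqdist X Y Z :
  2 * dotv (X - Z) (Y - Z) = sqdist X Z + sqdist Y Z - sqdist X Y.
Proof.
rewrite /sqdist /dotv mulr_sumr -sumrN -!big_split /=.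
by apply: eq_bigr => i _; rewrite !mxE; ring.
Qed.

Lemma sqdist_ball_convex X Y Z c s : 0 <= s <= 1 ->
  sqdist Y X <= c -> sqdist Z X <= c -> sqdist (s *: Y + (1 - s) *: Z) X <= c.
Proof.
move=> /andP[s0 s1] hY hZ; rewrite sqdist_convex_comb.
have hYZ : 0 <= s * (1 - s) * sqdist Y Z.
  by rewrite !mulr_ge0 ?sqdist_ge0 ?subr_ge0.
have : s * sqdist Y X <= s * c by rewrite ler_wpM2l.
have : (1 - s) * sqdist Z X <= (1 - s) * c by rewrite ler_wpM2l ?subr_ge0.
lra.
Qed.

Lemma exists_segment_in_ball X Y Z c : sqdist Z X < c ->
  exists2 s, 0 < s <= 1 & sqdist (s *: Y + (1 - s) *: Z) X <= c.
Proof.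
move=> hZ; set s := Num.min 1 ((c - sqdist Z X) / (sqdist Y X + 1)).
have hY := sqdist_ge0 Y X.
have s0 : 0 < s by rewrite lt_min ltr01 divr_gt0 ?subr_gt0 //; lra.
have s1 : s <= 1 by rewrite ge_min lexx.
have sY : s * (sqdist Y X + 1) <= c - sqdist Z X.
  by rewrite -ler_pdivlMr ?ge_min ?lexx ?orbT //; lra.
exists s; first by rewrite s0.
rewrite sqdist_convex_comb.
have : 0 <= s * (1 - s) * sqdist Y Z.
  by rewrite !mulr_ge0 ?sqdist_ge0 ?subr_ge0 // ltW.
have : 0 <= s * sqdist Z X by rewrite mulr_ge0 ?sqdist_ge0 // ltW.
nra.
Qed.

Lemma continuous_sqdist X : continuous (sqdist^~ X).
Proof.
rewrite /sqdist /dotv.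
apply: (@continuous_big _ _ +%R 0 xpredT) => [|i _ Y].
  exact: add_continuous.
have coordB : {for Y, continuous (fun Z : 'rV[R]_n => (Z - X) ord0 i)}.
  apply: (@continuous_comp _ _ _ (fun Z => Z - X) (fun M => M ord0 i)).
    exact: (@continuousB R _ _ (fun Z : 'rV[R]_n => Z) (fun=> X) Y cvg_id
      (@cst_continuous _ _ X Y)).
  exact: coord_continuous.
exact: (continuousM coordB coordB).
Qed.

Local Open Scope classical_set_scope.

Lemma compact_ball X c : compact [set Y | sqdist Y X <= c].
Proof.
apply: bounded_closed_compact.
  rewrite /bounded_near /=; near=> M => Y /= hY.
  apply: (@le_trans _ _ (`|X| + Num.sqrt c)); last first.
    by near: M; apply: nbhs_pinfty_ge; rewrite num_real.
  rewrite -[Y](subrK X) (le_trans (ler_normD _ _)) // addrC lerD2l.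
  exact: le_trans (normr_le_enorm _) (ler_wsqrtr hY).
apply: (@preimage_closed _ _ (sqdist^~ X) [set x | x <= c]) => [Y _|].
  exact: continuous_sqdist.
exact: closed_le.
Unshelve. all: by end_near.
Qed.

Lemma exists_min_in_ball (g : 'rV[R]_n -> R) X c : continuous g -> 0 <= c ->
  exists2 p, sqdist p X <= c & forall Y, sqdist Y X <= c -> g p <= g Y.
Proof.
move=> gC c0; have [|||p] := @EVT_min_rV R n g [set Y | sqdist Y X <= c].
- by exists X; rewrite /= sqdistxx.
- exact: compact_ball.
- exact: continuous_subspaceT.
by rewrite inE => pK pmin; exists p => // Y KY; apply: pmin; rewrite inE.
Qed.

Lemma continuous_of_sqdist_le (g : R -> 'rV[R]_n) k :
  (forall x y, sqdist (g x) (g y) <= k * `|x - y|) -> continuous g.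
Proof.
move=> hg x; apply/cvgrPdist_lt => e e0.
have k1 : 0 < `|k| + 1 by rewrite ltr_wpDl.
apply/nbhs_ballP; exists (e ^+ 2 / (`|k| + 1)).
  by rewrite /= divr_gt0 ?exprn_gt0.
move=> y; rewrite /ball /= ltr_pdivlMr // => xy.
apply: le_lt_trans (normr_le_enorm _) _.
rewrite -(ger0_norm (ltW e0)) -sqrtr_sqr ltr_sqrt ?exprn_gt0 //.
apply: le_lt_trans (hg x y) _; apply: le_lt_trans xy; rewrite mulrC.
by apply: ler_wpM2l; rewrite ?normr_ge0 // (le_trans (ler_norm k)) ?lerDl.
Qed.

End Euclidean.

Section Prox.
Variables (R : realType) (n : nat) (f : 'rV[R]_n -> R) (X0 : 'rV[R]_n) (c : R).
Hypothesis f_convex : convex_fun f.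
Implicit Types (p q Y Z : 'rV[R]_n) (s t : R).

Definition prox_obj t Y := t * f Y + sqdist Y X0 / 2.

Definition is_prox t p :=
  sqdist p X0 <= c /\
  forall Y, sqdist Y X0 <= c -> prox_obj t p <= prox_obj t Y.

Lemma prox_obj_convex_comb t s Y Z : 0 <= t -> 0 <= s <= 1 ->
  prox_obj t (s *: Y + (1 - s) *: Z) <=
  s * prox_obj t Y + (1 - s) * prox_obj t Z - s * (1 - s) * sqdist Y Z / 2.
Proof.
move=> t0 /andP[s0 s1]; rewrite /prox_obj sqdist_convex_comb.
have := ler_wpM2l t0 (f_convex Y Z s0 s1); lra.
Qed.

Lemma is_prox_growth t p Y : 0 <= t -> is_prox t p -> sqdist Y X0 <= c ->
  prox_obj t p + sqdist Y p / 2 <= prox_obj t Y.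
Proof.
move=> t0 [pK pmin] YK; apply: (@ler_of_small_slack _ _ _ (sqdist Y p / 2)).
move=> s s0 s1; have s01 : 0 <= s <= 1 by rewrite ltW.
have := pmin _ (sqdist_ball_convex s01 YK pK).
have := prox_obj_convex_comb Y p t0 s01 => h1 h2.
have : s * (prox_obj t p + sqdist Y p / 2) <=
       s * (prox_obj t Y + s * (sqdist Y p / 2)) by lra.
by rewrite ler_pM2l.
Qed.

Lemma is_prox_variational t p Y : 0 <= t -> is_prox t p -> sqdist Y X0 <= c ->
  dotv (X0 - p) (Y - p) <= t * (f Y - f p).
Proof.
move=> t0 pP YK; have := is_prox_growth t0 pP YK.
have := dotv_sqdist X0 Y p; rewrite /prox_obj (sqdistC X0 p) (sqdistC X0 Y).
lra.
Qed.

Lemma is_prox_subgradient t p : 0 < t -> is_prox t p -> sqdist p X0 < c ->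
  subgradient f p (t^-1 *: (X0 - p)).
Proof.
move=> t0 pP pint Y; rewrite dotvZl.
have [s /andP[s0 s1] ZK] := exists_segment_in_ball Y pint.
have := is_prox_variational (ltW t0) pP ZK.
have -> : s *: Y + (1 - s) *: p - p = s *: (Y - p).
  by apply/matrixP => i j; rewrite !mxE; ring.
rewrite dotvZr => hZ.
have hY : dotv (X0 - p) (Y - p) <= t * (f Y - f p).
  have := ler_wpM2l (ltW t0) (f_convex Y p (ltW s0) s1).
  by move=> hconv; rewrite -(ler_pM2l s0); lra.
have ti : 0 <= t^-1 by rewrite invr_ge0 ltW.
have := ler_wpM2l ti hY; rewrite mulKf ?gt_eqF //; lra.
Qed.

Lemma is_prox_sqdist_le s t p q :
  0 <= s -> 0 <= t -> is_prox s p -> is_prox t q ->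
  sqdist p q * (s + t) <= (t - s) * (sqdist q X0 - sqdist p X0).
Proof.
move=> s0 t0 pP qP.
have := ler_wpM2l t0 (is_prox_growth s0 pP qP.1).
have := ler_wpM2l s0 (is_prox_growth t0 qP pP.1).
rewrite /prox_obj (sqdistC q p); lra.
Qed.

Lemma is_prox_sqdist_center_le t p m : 0 <= c -> 0 <= t -> is_prox t p ->
  (forall Y, sqdist Y X0 <= c -> m <= f Y) -> sqdist p X0 <= 2 * t * (f X0 - m).
Proof.
move=> c0 t0 [pK pmin] fm.
have := pmin X0; rewrite /prox_obj sqdistxx => /(_ c0).
have := ler_wpM2l t0 (fm p pK); lra.
Qed.

Lemma exists_prox_path :
  continuous f -> 0 <= c -> exists P, forall t, is_prox t (P t).
Proof.
move=> f_cont c0; suff /choice[P P_prox] t : exists p, is_prox t p by exists P.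
have objC : continuous (prox_obj t).
  move=> Y.
  apply: (@continuousD _ R^o _ (fun Y => t * f Y) (fun Y => sqdist Y X0 / 2)).
    by apply: continuousM; [exact: cst_continuous | exact: f_cont].
  by apply: continuousM; [exact: continuous_sqdist | exact: cst_continuous].
by have [p pK pmin] := exists_min_in_ball X0 objC c0; exists p.
Qed.

Variable P : R -> 'rV[R]_n.
Hypothesis P_prox : forall t, is_prox t (P t).

(* The path is only 1/2-Hoelder away from t = 0; clamping the parameter at a
   keeps it there. *)
Lemma continuous_prox_path (a : R) :
  0 < a -> continuous (fun x : R => P (Num.max x a)).
Proof.
move=> a0; apply: (@continuous_of_sqdist_le _ _ _ (c / a)) => x y.
set s := Num.max x a; set t := Num.max y a.
have [[sK _] [tK _]] := (P_prox s, P_prox t).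
have as_ : a <= s by rewrite le_max lexx orbT.
have at_ : a <= t by rewrite le_max lexx orbT.
have hP := is_prox_sqdist_le (le_trans (ltW a0) as_) (le_trans (ltW a0) at_)
  (P_prox s) (P_prox t).
have hq : `|sqdist (P t) X0 - sqdist (P s) X0| <= c.
  have := sqdist_ge0 (P t) X0; have := sqdist_ge0 (P s) X0.
  by rewrite ler_norml => *; apply/andP; split; lra.
have hts : (t - s) * (sqdist (P t) X0 - sqdist (P s) X0) <= `|x - y| * c.
  apply: le_trans (ler_norm _) _; rewrite normrM distrC.
  by apply: ler_pM; rewrite ?normr_ge0 // dist_maxr_le.
have hD : sqdist (P s) (P t) * a <= sqdist (P s) (P t) * (s + t).
  by apply: ler_wpM2l; rewrite ?sqdist_ge0 //; lra.
by rewrite mulrAC ler_pdivlMr // mulrC; lra.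
Qed.

Lemma prox_path_sqdist_ivt v t1 : continuous f -> 0 <= c -> 0 < v -> 0 < t1 ->
  v <= sqdist (P t1) X0 -> exists2 t, 0 < t & sqdist (P t) X0 = v.
Proof.
move=> f_cont c0 v0 t10 vt1.
have [pm _ pm_min] := exists_min_in_ball X0 f_cont c0.
have C0 : 0 <= f X0 - f pm by rewrite subr_ge0 pm_min // sqdistxx.
set a := Num.min t1 (v / (2 * (f X0 - f pm) + 1)).
have C1 : 0 < 2 * (f X0 - f pm) + 1 by lra.
have a0 : 0 < a by rewrite lt_min t10 divr_gt0.
have a_t1 : a <= t1 by rewrite ge_min lexx.
have av : a * (2 * (f X0 - f pm) + 1) <= v.
  by rewrite -ler_pdivlMr // ge_min lexx orbT.
have va : sqdist (P a) X0 <= v.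
  have := is_prox_sqdist_center_le c0 (ltW a0) (P_prox a) pm_min; nra.
pose G := (fun Y => sqdist Y X0) \o (fun x : R => P (Num.max x a)).
have G_cont : continuous G.
  move=> x; apply: continuous_comp; first exact: continuous_prox_path.
  exact: continuous_sqdist.
have [x _ Gx] : exists2 x, x \in `[a, t1] & G x = v.
  apply: (IVT a_t1 (continuous_subspaceT G_cont)).
  by rewrite /G /= maxxx (max_l a_t1) ge_min le_max va vt1 orbT.
by exists (Num.max x a); rewrite // lt_max a0 orbT.
Qed.

Lemma prox_path_escapes dl rho : 0 < dl -> 0 < rho -> rho ^+ 2 <= c ->
  (forall X d, sqdist X X0 < rho ^+ 2 -> subgradient f X d -> dl <= enorm d) ->
  rho ^+ 2 <= sqdist (P (rho / dl)) X0.
Proof.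
move=> dl0 rho0 rho_c dl_le; rewrite leNgt; apply/negP => near.
have t0 : 0 < rho / dl by rewrite divr_gt0.
have := dl_le _ _ near
  (is_prox_subgradient t0 (P_prox _) (lt_le_trans near rho_c)).
have sq_lt : Num.sqrt (sqdist (P (rho / dl)) X0) < rho.
  by rewrite -[ltRHS](ger0_norm (ltW rho0)) -sqrtr_sqr ltr_sqrt ?exprn_gt0.
rewrite enormZ ger0_norm; last by rewrite invr_ge0 ltW.
rewrite invf_div enormB sqdistC.
by rewrite mulrAC ler_pdivlMr // ler_pM2l // leNgt sq_lt.
Qed.
End Prox.

Theorem lemma2p2 (R : realType) (n : nat) (f : 'rV[R]_n -> R)
  (X0 : 'rV[R]_n) (r : R) :
  convex_fun f -> continuous f -> 0 < r ->
  (exists dl : R, 0 < dl /\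
     forall X d : 'rV[R]_n, in_open_ball X0 r X -> subgradient f X d ->
       dl <= enorm d) ->
  exists X d : 'rV[R]_n,
    [/\ in_open_ball X0 r X, subgradient f X d &
        X - X0 = - ((r / 2) *: ((enorm d)^-1 *: d))].
Proof.
move=> f_convex f_cont r0 [dl [dl0 dl_le]].
set rho := r / 2; have rho0 : 0 < rho by rewrite divr_gt0.
have rho_r : rho ^+ 2 < r ^+ 2 by rewrite /rho !expr2; nra.
have in_ball X : sqdist X X0 <= rho ^+ 2 -> in_open_ball X0 r X.
  move=> hX; rewrite /in_open_ball enormB (@le_lt_trans _ _ rho) //.
    by rewrite -[leRHS](ger0_norm (ltW rho0)) -sqrtr_sqr ler_wsqrtr.
  by rewrite /rho; lra.
have [P P_prox] := exists_prox_path X0 f_cont (sqr_ge0 r).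
have escape := prox_path_escapes f_convex P_prox dl0 rho0 (ltW rho_r)
  (fun X d hX => dl_le X d (in_ball X (ltW hX))).
have [t t0 Pt] := prox_path_sqdist_ivt f_convex P_prox f_cont (sqr_ge0 r)
  (exprn_gt0 2 rho0) (divr_gt0 rho0 dl0) escape.
exists (P t), (t^-1 *: (X0 - P t)); split.
- by apply: in_ball; rewrite Pt.
- by apply: is_prox_subgradient; rewrite ?Pt.
rewrite enormZ enormB sqdistC Pt sqrtr_sqr !ger0_norm ?invr_ge0 1?ltW //.
rewrite !scalerA -/rho (_ : _ * _ * _ = 1) ?scale1r ?opprB //.
by field; rewrite !gt_eqF.
Qed.
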